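(* $\mathrm{NP}/\mathrm{rpoly}=\mathrm{ALL}$, i.e., every promise problem $A=(A_{yes},A_{no})$ over $\{0,1\}^*$ belongs to $\mathrm{NP}/\mathrm{rpoly}$.
   Context: NP/rpoly: $A=(A_{yes},A_{no})\in\mathrm{NP}/\mathrm{rpoly}$ iff there exist a classical probabilistic polynomial-time algorithm $M$ and a family $\{q_s\}_{s\in\mathbb{N}}$ of probability distributions $q_s$ on $\{0,1\}^{\mathrm{poly}(s)}$ (arbitrary, not required to be computable) such that, when $M$ is run on input $(x,b)$ with $b$ sampled from $q_{|x|}$, $\Pr(M\text{ accepts})>0$ if $x\in A_{yes}$ and $\Pr(M\text{ accepts})=0$ if $x\in A_{no}$. ALL denotes the class of all (promise) problems. *)

From Stdlib Require Import Reals List Arith Bool.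
Import ListNotations.
Open Scope R_scope.

(* States are 0 .. nstates-1; 0 is the start state, 1 is the (halting)*)
(* accepting state; reaching a state >= nstates halts (rejecting).     *)
(* Since delta only matters on the finite domain {0..nstates-1} x sym, *)
(* a TM is a finite object.                                             *)

Inductive sym : Type := Blank | Zero | One | Sep.
Inductive move : Type := MLeft | MRight | MStay.

Record TM : Type := mkTM {
  nstates : nat;
  delta : nat -> sym -> (nat * sym * move)
}.

Record config : Type := mkConfig {
  cst : nat;
  cleft : list sym;   (* cells to the left of the head, nearest first *)
  ccur : sym;
  cright : list sym   (* cells to the right of the head, nearest first *)
}.

Definition step (M : TM) (c : config) : config :=
  if orb (Nat.eqb (cst c) 1) (negb (Nat.ltb (cst c) (nstates M))) then c
  else
    match delta M (cst c) (ccur c) with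
    | (q, s, MLeft) =>
        match cleft c with
        | nil => mkConfig q nil Blank (s :: cright c)
        | h :: t => mkConfig q t h (s :: cright c)
        end
    | (q, s, MRight) =>
        match cright c with
        | nil => mkConfig q (s :: cleft c) Blank nil
        | h :: t => mkConfig q (s :: cleft c) h t
        end
    | (q, s, MStay) => mkConfig q (cleft c) s (cright c)
    end.

Definition init_config (w : list sym) : config :=
  match w with
  | nil => mkConfig 0 nil Blank nil
  | h :: t => mkConfig 0 nil h t
  end.

Definition run (M : TM) (t : nat) (c : config) : config := Nat.iter t (step M) c.

(* M accepts w within t steps (state 1 is absorbing). *)
Definition accepts_within (M : TM) (t : nat) (w : list sym) : bool :=
  Nat.eqb (cst (run M t (init_config w))) 1.

Definition poly_bound (c k n : nat) : nat := (c * n ^ k + c)%nat.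

Definition bit (b : bool) : sym := if b then One else Zero.

Definition encode3 (x b r : list bool) : list sym :=
  map bit x ++ Sep :: map bit b ++ Sep :: map bit r.

Fixpoint all_bits (n : nat) : list (list bool) :=
  match n with
  | O => [nil]
  | S m => map (cons false) (all_bits m) ++ map (cons true) (all_bits m)
  end.

Definition sumR {A : Type} (l : list A) (f : A -> R) : R :=
  fold_right (fun a acc => f a + acc) 0 l.

(* A classical probabilistic polynomial-time algorithm: a TM that gets   *)
(* its input (x,b) and a uniformly random string r of polynomial length, *)
(* and is clocked to a polynomial number of steps in its input length.  *)
Record PPTM : Type := mkPPTM {
  ptm : TM;
  time_c : nat; time_k : nat;
  rand_c : nat; rand_k : nat
}.

Definition rand_len (M : PPTM) (x b : list bool) : nat :=
  poly_bound (rand_c M) (rand_k M) (length x + length b).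

Definition run_accepts (M : PPTM) (x b r : list bool) : bool :=
  let w := encode3 x b r in
  accepts_within (ptm M) (poly_bound (time_c M) (time_k M) (length w)) w.

Definition acc_prob (M : PPTM) (x b : list bool) : R :=
  INR (length (filter (run_accepts M x b) (all_bits (rand_len M x b))))
  / 2 ^ (rand_len M x b).

Definition advice_dist_family (len : nat -> nat) (q : nat -> list bool -> R) : Prop :=
  forall s : nat,
    (forall b, 0 <= q s b) /\
    (forall b, length b <> len s -> q s b = 0) /\
    sumR (all_bits (len s)) (q s) = 1.

Definition total_acc_prob (M : PPTM) (len : nat -> nat) (q : nat -> list bool -> R)
    (x : list bool) : R :=
  sumR (all_bits (len (length x))) (fun b => q (length x) b * acc_prob M x b).

Definition promise_problem (Ayes Ano : list bool -> Prop) : Prop :=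
  forall x, Ayes x -> Ano x -> False.

Definition in_NP_rpoly (Ayes Ano : list bool -> Prop) : Prop :=
  exists (M : PPTM) (len : nat -> nat) (c k : nat) (q : nat -> list bool -> R),
    (forall s, (len s <= poly_bound c k s)%nat) /\
    advice_dist_family len q /\
    forall x : list bool,
      (Ayes x -> total_acc_prob M len q x > 0) /\
      (Ano x -> total_acc_prob M len q x = 0).

(* The advice alone can decide membership: for inputs of length s, let the
   advice be [y ++ [chi y]] for a uniformly random y of length s, where chi is
   the (uncomputable) characteristic function of Ayes.  The verifier accepts
   iff the advice equals [x ++ [true]].  On a yes-instance this string has
   probability 2^-s > 0; on a no-instance chi x = false, so the only accepted
   advice has probability 0.  All that remains is to build a single-tape
   Turing machine performing this string comparison in quadratic time. *)
From Stdlib Require Import Reals List Bool Lia Lra ClassicalEpsilon.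
Import ListNotations.
Open Scope nat_scope.

Section Runs.

Variable M : TM.

Definition halted (c : config) : Prop := cst c = 1 \/ nstates M <= cst c.

Lemma step_halted (c : config) : halted c -> step M c = c.
Proof.
  intros [H1 | Hn]; unfold step.
  - rewrite H1. reflexivity.
  - destruct (cst c =? 1); [reflexivity |].
    replace (cst c <? nstates M) with false by (symmetry; apply Nat.ltb_ge; exact Hn).
    reflexivity.
Qed.

Lemma run_halted (n : nat) (c : config) : halted c -> run M n c = c.
Proof.
  intros Hc. induction n as [|n IH]; [reflexivity |].
  change (step M (run M n c) = c). rewrite IH. exact (step_halted c Hc).
Qed.

Lemma run_add (m n : nat) (c : config) : run M (m + n) c = run M n (run M m c).
Proof. unfold run. rewrite Nat.add_comm. apply Nat.iter_add. Qed.

Lemma run_one (c : config) : run M 1 c = step M c.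
Proof. reflexivity. Qed.

Definition settles (n : nat) (c : config) (q : nat) : Prop :=
  forall t, n <= t -> cst (run M t c) = q.

Lemma settles_halted (c : config) : halted c -> settles 0 c (cst c).
Proof. intros Hc t _. rewrite run_halted by exact Hc. reflexivity. Qed.

Lemma settles_run (m n : nat) (c : config) (q : nat) :
  settles n (run M m c) q -> settles (m + n) c q.
Proof.
  intros H t Ht. replace t with (m + (t - m)) by lia.
  rewrite run_add. apply H. lia.
Qed.

Lemma settles_mono (n n' : nat) (c : config) (q : nat) :
  n <= n' -> settles n c q -> settles n' c q.
Proof. intros Hn H t Ht. apply H. lia. Qed.

Definition tape (q : nat) (L w : list sym) : config :=
  match w with
  | [] => mkConfig q L Blank []
  | y :: w' => mkConfig q L y w'
  end.

Definition active (q : nat) : Prop := q <> 1 /\ q < nstates M.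

Lemma step_active (q : nat) (L : list sym) (y : sym) (w : list sym) : active q ->
  step M (tape q L (y :: w)) =
  match delta M q y with
  | (q', y', MLeft) => tape q' (tl L) (hd Blank L :: y' :: w)
  | (q', y', MRight) => tape q' (y' :: L) w
  | (q', y', MStay) => tape q' L (y' :: w)
  end.
Proof.
  intros [H1 Hn]. unfold step; cbn [tape cst ccur cleft cright].
  replace (q =? 1) with false by (symmetry; apply Nat.eqb_neq; exact H1).
  replace (q <? nstates M) with true by (symmetry; apply Nat.ltb_lt; exact Hn).
  destruct (delta M q y) as [[q' y'] []]; [destruct L | destruct w |]; reflexivity.
Qed.

Lemma step_right (q : nat) (L : list sym) (y : sym) (w : list sym) (q' : nat) (y' : sym) :
  active q -> delta M q y = (q', y', MRight) -> step M (tape q L (y :: w)) = tape q' (y' :: L) w.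
Proof. intros Hq Hd. rewrite step_active, Hd by exact Hq. reflexivity. Qed.

Lemma step_left (q : nat) (l : sym) (L : list sym) (y : sym) (w : list sym) (q' : nat) (y' : sym) :
  active q -> delta M q y = (q', y', MLeft) ->
  step M (tape q (l :: L) (y :: w)) = tape q' L (l :: y' :: w).
Proof. intros Hq Hd. rewrite step_active, Hd by exact Hq. reflexivity. Qed.

Lemma step_stay (q : nat) (L : list sym) (y : sym) (w : list sym) (q' : nat) (y' : sym) :
  active q -> delta M q y = (q', y', MStay) -> step M (tape q L (y :: w)) = tape q' L (y' :: w).
Proof. intros Hq Hd. rewrite step_active, Hd by exact Hq. reflexivity. Qed.

Lemma scan_right (q : nat) (u L w : list sym) : active q ->
  (forall y, In y u -> delta M q y = (q, y, MRight)) ->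
  run M (length u) (tape q L (u ++ w)) = tape q (rev u ++ L) w.
Proof.
  intros Hq. revert L. induction u as [|y u IH]; intros L Hu; [reflexivity |].
  replace (length (y :: u)) with (1 + length u) by reflexivity. rewrite run_add.
  rewrite run_one; cbn [app]. rewrite (step_right q L y (u ++ w) q y Hq (Hu y (or_introl eq_refl))).
  rewrite IH by (intros z Hz; apply Hu; right; exact Hz).
  cbn [rev]. rewrite <- app_assoc. reflexivity.
Qed.

Lemma scan_left (q : nat) (y : sym) (u : list sym) (l : sym) (L w : list sym) : active q ->
  (forall z, In z (y :: u) -> delta M q z = (q, z, MLeft)) ->
  run M (S (length u)) (tape q (u ++ l :: L) (y :: w)) = tape q L (l :: rev u ++ y :: w).
Proof.
  intros Hq. revert y w. induction u as [|z u IH]; intros y w Hu.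
  - rewrite run_one; cbn [app]. exact (step_left q l L y w q y Hq (Hu y (or_introl eq_refl))).
  - replace (S (length (z :: u))) with (1 + S (length u)) by reflexivity. rewrite run_add.
    rewrite run_one; cbn [app].
    rewrite (step_left q z (u ++ l :: L) y w q y Hq (Hu y (or_introl eq_refl))).
    rewrite IH by (intros v [<- | Hv]; apply Hu; right; [left; reflexivity | right; exact Hv]).
    cbn [rev]. rewrite <- app_assoc. reflexivity.
Qed.

Lemma settles_stay_halt (q : nat) (L : list sym) (y : sym) (w : list sym) (q' : nat) (y' : sym) :
  active q -> delta M q y = (q', y', MStay) -> q' = 1 \/ nstates M <= q' ->
  settles 1 (tape q L (y :: w)) q'.
Proof.
  intros Hq Hd Hq'. apply (settles_run 1 0).
  rewrite run_one, (step_stay q L y w q' y' Hq Hd).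
  apply (settles_halted (tape q' L (y' :: w))). exact Hq'.
Qed.

End Runs.

Definition carry_in_input (a : bool) : nat := if a then 3 else 2.
Definition carry_in_advice (a : bool) : nat := if a then 5 else 4.

(* Each round erases the first remaining bit [a] of [x] (state 0), carries it
   to the right across [x] (states 2/3) and across the erased prefix of the
   advice (states 4/5), erases the matching advice bit, and walks back
   (states 7, 8).  Once [x] is used up (state 6) the remaining advice must be
   exactly the bit 1.  State 1 accepts; state 10 = [nstates] rejects. *)
Definition checker_delta (q : nat) (y : sym) : nat * sym * move :=
  match q, y with
  | 0, Zero => (2, Blank, MRight)
  | 0, One => (3, Blank, MRight)
  | 0, Sep => (6, Sep, MRight)
  | (2 | 3), (Zero | One) => (q, y, MRight)
  | 2, Sep => (4, Sep, MRight)
  | 3, Sep => (5, Sep, MRight)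
  | (4 | 5), Blank => (q, Blank, MRight)
  | 4, Zero => (7, Blank, MStay)
  | 5, One => (7, Blank, MStay)
  | 7, Blank => (7, Blank, MLeft)
  | 7, Sep => (8, Sep, MStay)
  | 8, (Zero | One | Sep) => (8, y, MLeft)
  | 8, Blank => (0, Blank, MRight)
  | 6, Blank => (6, Blank, MRight)
  | 6, One => (9, One, MRight)
  | 9, Sep => (1, Sep, MStay)
  | _, _ => (10, y, MStay)
  end.

Definition checker : TM := mkTM 10 checker_delta.

Lemma in_map_bit (y : sym) (x : list bool) : In y (map bit x) -> y = Zero \/ y = One.
Proof. intros Hy. apply in_map_iff in Hy. destruct Hy as [[] [<- _]]; auto. Qed.

Ltac solve_active := split; cbn; lia.

Lemma carry_bit (a : bool) (x : list bool) (j k : nat) (w : list sym) :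
  run checker (length x + k + 2)
    (tape 0 (repeat Blank j) (map bit (a :: x) ++ Sep :: repeat Blank k ++ w)) =
  tape (carry_in_advice a) (repeat Blank k ++ Sep :: rev (map bit x) ++ Blank :: repeat Blank j) w.
Proof.
  replace (length x + k + 2) with (1 + (length (map bit x) + (1 + length (repeat Blank k))))
    by (rewrite length_map, repeat_length; lia).
  rewrite !run_add, !run_one; cbn [map app].
  rewrite (step_right _ _ _ _ _ (carry_in_input a) Blank) by (destruct a; reflexivity || solve_active).
  rewrite scan_right
    by (destruct a; first [solve_active | intros y Hy; destruct (in_map_bit y x Hy) as [-> | ->]; reflexivity]).
  rewrite (step_right _ _ _ _ _ (carry_in_advice a) Sep) by (destruct a; reflexivity || solve_active).
  rewrite scan_right
    by (destruct a; first [solve_active | intros y Hy; rewrite (repeat_spec k Blank y Hy); reflexivity]).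
  rewrite rev_repeat. reflexivity.
Qed.

Lemma blanks_snoc (k : nat) (w : list sym) : repeat Blank k ++ Blank :: w = repeat Blank (S k) ++ w.
Proof. change (Blank :: w) with ([Blank] ++ w). rewrite app_assoc, <- repeat_cons. reflexivity. Qed.

Lemma round_match (a : bool) (x : list bool) (j k : nat) (b : list bool) :
  run checker (2 * length x + 2 * k + 7)
    (tape 0 (repeat Blank j) (map bit (a :: x) ++ Sep :: repeat Blank k ++ map bit (a :: b) ++ [Sep])) =
  tape 0 (repeat Blank (S j)) (map bit x ++ Sep :: repeat Blank (S k) ++ map bit b ++ [Sep]).
Proof.
  replace (2 * length x + 2 * k + 7) with
    ((length x + k + 2) + (1 + (S (length (repeat Blank k)) + (1 + (S (length (rev (map bit x))) + 1)))))
    by (rewrite length_rev, length_map, repeat_length; lia).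
  rewrite run_add, carry_bit, !run_add, !run_one; cbn [map app].
  rewrite (step_stay _ _ _ _ _ 7 Blank) by (destruct a; reflexivity || solve_active).
  rewrite scan_left by (solve_active || (intros y [<- | Hy]; [| rewrite (repeat_spec k Blank y Hy)]; reflexivity)).
  rewrite (step_stay _ _ _ _ _ 8 Sep) by (reflexivity || solve_active).
  rewrite scan_left
    by (solve_active || (intros y [<- | Hy]; [| apply in_rev in Hy; destruct (in_map_bit y x Hy) as [-> | ->]]; reflexivity)).
  rewrite (step_right _ _ _ _ _ 0 Blank) by (reflexivity || solve_active).
  rewrite rev_involutive, rev_repeat, blanks_snoc. reflexivity.
Qed.

Lemma round_mismatch (a : bool) (x : list bool) (j k : nat) (b : list bool) :
  (forall b', b <> a :: b') ->
  settles checker (length x + k + 3)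
    (tape 0 (repeat Blank j) (map bit (a :: x) ++ Sep :: repeat Blank k ++ map bit b ++ [Sep])) 10.
Proof.
  intros Hb. replace (length x + k + 3) with ((length x + k + 2) + 1) by lia.
  apply settles_run. rewrite carry_bit.
  destruct b as [|c b]; cbn [map app].
  - apply (settles_stay_halt _ _ _ _ _ _ Sep); [destruct a; solve_active | destruct a; reflexivity | cbn; lia].
  - assert (Hca : c <> a) by (intros ->; exact (Hb b eq_refl)).
    apply (settles_stay_halt _ _ _ _ _ _ (bit c));
      [destruct a; solve_active | destruct a, c; [congruence | reflexivity | reflexivity | congruence] | cbn; lia].
Qed.

Lemma final_round (j k : nat) (b : list bool) :
  settles checker (k + 3)
    (tape 0 (repeat Blank j) (Sep :: repeat Blank k ++ map bit b ++ [Sep]))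
    (if list_eq_dec bool_dec b [true] then 1 else 10).
Proof.
  replace (k + 3) with (1 + (length (repeat Blank k) + 2)) by (rewrite repeat_length; lia).
  apply settles_run. rewrite run_one, (step_right _ _ _ _ _ 6 Sep) by (reflexivity || solve_active).
  apply settles_run. rewrite scan_right by (solve_active || (intros y Hy; rewrite (repeat_spec k Blank y Hy); reflexivity)).
  destruct b as [|[] b]; [| destruct b as [|c b] |]; cbn [map app bit].
  - apply (settles_mono _ 1); [lia |].
    apply (settles_stay_halt _ _ _ _ _ _ Sep); [solve_active | reflexivity | cbn; lia].
  - apply (settles_run _ 1 1). rewrite run_one, (step_right _ _ _ _ _ 9 One) by (reflexivity || solve_active).
    apply (settles_stay_halt _ _ _ _ _ _ Sep); [solve_active | reflexivity | left; reflexivity].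
  - apply (settles_run _ 1 1). rewrite run_one, (step_right _ _ _ _ _ 9 One) by (reflexivity || solve_active).
    apply (settles_stay_halt _ _ _ _ _ _ (bit c)); [solve_active | destruct c; reflexivity | cbn; lia].
  - apply (settles_mono _ 1); [lia |].
    apply (settles_stay_halt _ _ _ _ _ _ Zero); [solve_active | reflexivity | cbn; lia].
Qed.

Lemma list_eq_dec_cons {A : Type} (u v : A) (a : bool) (b c : list bool) :
  (if list_eq_dec bool_dec (a :: b) (a :: c) then u else v) =
  (if list_eq_dec bool_dec b c then u else v).
Proof.
  destruct (list_eq_dec bool_dec (a :: b) (a :: c)) as [Habc | Habc];
    destruct (list_eq_dec bool_dec b c) as [Hbc | Hbc]; congruence.
Qed.

(* [length x + k] is invariant across rounds, so every round fits in the time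
   of the first one. *)
Lemma checker_settles (x : list bool) (j k : nat) (b : list bool) :
  settles checker ((length x + 1) * (2 * length x + 2 * k + 7))
    (tape 0 (repeat Blank j) (map bit x ++ Sep :: repeat Blank k ++ map bit b ++ [Sep]))
    (if list_eq_dec bool_dec b (x ++ [true]) then 1 else 10).
Proof.
  revert j k b. induction x as [|a x IH]; intros j k b.
  - apply (settles_mono _ (k + 3)); [cbn; lia | apply final_round].
  - destruct (list_eq_dec bool_dec b (a :: skipn 1 b)) as [Hb | Hb].
    + rewrite Hb, <- app_comm_cons, list_eq_dec_cons.
      apply (settles_mono _ ((2 * length x + 2 * k + 7) +
                             (length x + 1) * (2 * length x + 2 * S k + 7))); [cbn [length]; nia |].
      apply settles_run. rewrite round_match. apply IH.
    + destruct (list_eq_dec bool_dec b ((a :: x) ++ [true])) as [Hx | _].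
      { exfalso. apply Hb. rewrite Hx. reflexivity. }
      apply (settles_mono _ (length x + k + 3)); [cbn [length]; nia |].
      apply round_mismatch. intros b' ->. apply Hb. reflexivity.
Qed.

Definition checker_pptm : PPTM := mkPPTM checker 3 2 0 0.

Lemma init_config_tape (w : list sym) : init_config w = tape 0 [] w.
Proof. destruct w; reflexivity. Qed.

Lemma run_accepts_checker (x b : list bool) :
  run_accepts checker_pptm x b [] = if list_eq_dec bool_dec b (x ++ [true]) then true else false.
Proof.
  unfold run_accepts, accepts_within; cbn [ptm time_c time_k checker_pptm].
  set (w := encode3 x b []).
  assert (Hw : length w = length x + length b + 2)
    by (unfold w, encode3; rewrite length_app; cbn [length]; rewrite length_app, !length_map; cbn [length map]; lia).
  rewrite init_config_tape.
  change (tape 0 [] w) with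
    (tape 0 (repeat Blank 0) (map bit x ++ Sep :: repeat Blank 0 ++ map bit b ++ [Sep])).
  rewrite (checker_settles x 0 0 b) by (unfold poly_bound; rewrite Hw, Nat.pow_2_r; nia).
  destruct (list_eq_dec bool_dec b (x ++ [true])); reflexivity.
Qed.

Open Scope R_scope.

Lemma acc_prob_checker (x b : list bool) :
  acc_prob checker_pptm x b = if list_eq_dec bool_dec b (x ++ [true]) then 1 else 0.
Proof.
  unfold acc_prob. change (rand_len checker_pptm x b) with 0%nat.
  cbn [all_bits filter]. rewrite run_accepts_checker.
  destruct (list_eq_dec bool_dec b (x ++ [true])); cbn [length INR pow]; field.
Qed.

Section Sums.

Context {A : Type}.

Lemma sumR_app (l1 l2 : list A) (f : A -> R) : sumR (l1 ++ l2) f = sumR l1 f + sumR l2 f.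
Proof. unfold sumR. induction l1 as [|a l1 IH]; cbn; [ring | rewrite IH; ring]. Qed.

Lemma sumR_map {B : Type} (g : B -> A) (l : list B) (f : A -> R) :
  sumR (map g l) f = sumR l (fun b => f (g b)).
Proof. unfold sumR. induction l as [|b l IH]; cbn; [reflexivity | rewrite IH; reflexivity]. Qed.

Lemma sumR_ext_in (l : list A) (f g : A -> R) :
  (forall a, In a l -> f a = g a) -> sumR l f = sumR l g.
Proof.
  unfold sumR. induction l as [|a l IH]; intros Hfg; cbn; [reflexivity |].
  rewrite (Hfg a (or_introl eq_refl)), IH by (intros b Hb; apply Hfg; right; exact Hb).
  reflexivity.
Qed.

Lemma sumR_eq0 (l : list A) (f : A -> R) : (forall a, f a = 0) -> sumR l f = 0.
Proof. unfold sumR. intros Hf. induction l as [|a l IH]; cbn; [reflexivity | rewrite Hf, IH; ring]. Qed.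

Lemma sumR_ge0 (l : list A) (f : A -> R) : (forall a, 0 <= f a) -> 0 <= sumR l f.
Proof.
  unfold sumR. intros Hf. induction l as [|a l IH]; cbn; [lra |].
  pose proof (Hf a). lra.
Qed.

Lemma sumR_gt0_in (l : list A) (f : A -> R) (a : A) :
  (forall b, 0 <= f b) -> In a l -> 0 < f a -> 0 < sumR l f.
Proof.
  intros Hf Ha Hfa. induction l as [|b l IH]; [destruct Ha |].
  change (0 < f b + sumR l f).
  destruct Ha as [<- | Ha].
  - pose proof (sumR_ge0 l f Hf). lra.
  - pose proof (Hf b). pose proof (IH Ha). lra.
Qed.

End Sums.

Lemma sumR_all_bits_S (n : nat) (f : list bool -> R) :
  sumR (all_bits (S n)) f = sumR (all_bits n) (fun y => f (y ++ [false]) + f (y ++ [true])).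
Proof.
  revert f. induction n as [|n IH]; intros f.
  - unfold sumR; cbn. ring.
  - change (all_bits (S (S n))) with
      (map (cons false) (all_bits (S n)) ++ map (cons true) (all_bits (S n))).
    change (all_bits (S n)) with
      (map (cons false) (all_bits n) ++ map (cons true) (all_bits n)) at 3.
    rewrite !sumR_app, !sumR_map, !IH. reflexivity.
Qed.

Lemma sumR_all_bits_const (n : nat) (c : R) : sumR (all_bits n) (fun _ => c) = 2 ^ n * c.
Proof.
  induction n as [|n IH].
  - unfold sumR; cbn. ring.
  - cbn [all_bits]. rewrite sumR_app, !sumR_map, IH. cbn [pow]. ring.
Qed.

Lemma length_all_bits (n : nat) (y : list bool) : In y (all_bits n) -> length y = n.
Proof.
  revert y. induction n as [|n IH]; intros y Hy; cbn in Hy.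
  - destruct Hy as [<- | []]. reflexivity.
  - apply in_app_or in Hy.
    destruct Hy as [Hy | Hy]; apply in_map_iff in Hy; destruct Hy as [z [<- Hz]];
      cbn; rewrite (IH z Hz); reflexivity.
Qed.

Lemma in_all_bits (y : list bool) : In y (all_bits (length y)).
Proof.
  induction y as [|[] y IH]; cbn; [left; reflexivity | |];
    apply in_or_app; [right | left]; apply in_map; exact IH.
Qed.

Definition chi (P : list bool -> Prop) (y : list bool) : bool :=
  if excluded_middle_informative (P y) then true else false.

(* The uniform distribution on the strings [y ++ [chi P y]] with [length y = s]. *)
Definition graph_advice (P : list bool -> Prop) (s : nat) (b : list bool) : R :=
  if ((length b =? S s)%nat && Bool.eqb (last b false) (chi P (removelast b)))%bool
  then / 2 ^ s else 0.

Lemma graph_advice_ge0 (P : list bool -> Prop) (s : nat) (b : list bool) : 0 <= graph_advice P s b.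
Proof.
  unfold graph_advice. destruct (_ && _)%bool; [| lra].
  left. apply Rinv_0_lt_compat, pow_lt. lra.
Qed.

Lemma graph_advice_snoc (P : list bool -> Prop) (y : list bool) (c : bool) :
  graph_advice P (length y) (y ++ [c]) = if Bool.eqb c (chi P y) then / 2 ^ length y else 0.
Proof.
  unfold graph_advice. rewrite length_app, removelast_last, last_last.
  replace (length y + length [c] =? S (length y))%nat with true
    by (symmetry; apply Nat.eqb_eq; cbn; lia).
  reflexivity.
Qed.

Lemma graph_advice_family (P : list bool -> Prop) : advice_dist_family S (graph_advice P).
Proof.
  intros s. split; [| split].
  - apply graph_advice_ge0.
  - intros b Hb. unfold graph_advice.
    replace (length b =? S s)%nat with false by (symmetry; apply Nat.eqb_neq; exact Hb).
    reflexivity.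
  - rewrite sumR_all_bits_S, (sumR_ext_in _ _ (fun _ => / 2 ^ s)).
    + rewrite sumR_all_bits_const. field. apply pow_nonzero. lra.
    + intros y Hy. rewrite <- (length_all_bits s y Hy), !graph_advice_snoc.
      destruct (chi P y); cbn; ring.
Qed.

Lemma total_acc_prob_checker_pos (P : list bool -> Prop) (x : list bool) :
  P x -> total_acc_prob checker_pptm S (graph_advice P) x > 0.
Proof.
  intros Hx. apply (sumR_gt0_in _ _ (x ++ [true])).
  - intros b. rewrite acc_prob_checker. pose proof (graph_advice_ge0 P (length x) b).
    destruct (list_eq_dec bool_dec b (x ++ [true])); lra.
  - replace (S (length x)) with (length (x ++ [true])) by (rewrite length_app; cbn; lia).
    apply in_all_bits.
  - rewrite acc_prob_checker, graph_advice_snoc.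
    destruct (list_eq_dec bool_dec (x ++ [true]) (x ++ [true])) as [_ | C]; [| congruence].
    unfold chi. destruct (excluded_middle_informative (P x)) as [_ | C]; [| contradiction].
    cbn. rewrite Rmult_1_r. apply Rinv_0_lt_compat, pow_lt. lra.
Qed.

Lemma total_acc_prob_checker_eq0 (P : list bool -> Prop) (x : list bool) :
  ~ P x -> total_acc_prob checker_pptm S (graph_advice P) x = 0.
Proof.
  intros Hx. apply sumR_eq0. intros b. rewrite acc_prob_checker.
  destruct (list_eq_dec bool_dec b (x ++ [true])) as [-> | _]; [| ring].
  rewrite graph_advice_snoc. unfold chi.
  destruct (excluded_middle_informative (P x)) as [Hpx | _]; [contradiction | cbn; ring].
Qed.

Theorem mainTheorem6 :
  forall (Ayes Ano : list bool -> Prop),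
    promise_problem Ayes Ano -> in_NP_rpoly Ayes Ano.
Proof.
  intros Ayes Ano Hpromise.
  exists checker_pptm, S, 1%nat, 1%nat, (graph_advice Ayes).
  split; [intros s; unfold poly_bound; cbn; lia |].
  split; [apply graph_advice_family |].
  intros x. split.
  - apply total_acc_prob_checker_pos.
  - intros Hno. apply total_acc_prob_checker_eq0. intros Hyes. exact (Hpromise x Hyes Hno).
Qed.
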